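(* Assume the Collatz conjecture: for every positive integer $n$ there is $j\ge 0$ with $T_0^{(j)}(n)=1$. Then for every integer $k\ge 0$ and every positive integer $n$, the $T_k$-trajectory $n, T_k(n), T_k^{(2)}(n),\dots$ eventually enters the cycle $3^k\to 2\cdot 3^k\to 3^k$.
   Context: For an integer $k\ge 0$, define $T_k$ on the positive integers by $T_k(n)=(3n+3^k)/2$ if $n$ is odd and $T_k(n)=n/2$ if $n$ is even. In particular $T_0(n)=(3n+1)/2$ for odd $n$ and $n/2$ for even $n$. For any map $T$, $T^{(j)}$ denotes its $j$-fold iterate, with $T^{(0)}$ the identity. *)

From mathcomp Require Import all_boot.

Definition T (k n : nat) : nat :=
  if odd n then (3 * n + 3 ^ k)./2 else n./2.

(** Iterating [T_k] from any [n] eventually produces a multiple of [3^k]: an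
    odd multiple of [3^i] with [i < k] is sent to a multiple of [3^(i+1)], and
    halving strictly decreases [n] while preserving divisibility by powers of
    [3].  On multiples of [3^k] the map [T_k] is conjugate to [T_0] by scaling,
    [T_k (3^k m) = 3^k T_0 m], so the Collatz conjecture for [m] carries the
    trajectory into [3^k] times the cycle [1 -> 2 -> 1]. *)

From mathcomp Require Import all_boot zify.

Set Implicit Arguments.
Unset Strict Implicit.

Lemma double_T k n : (T k n).*2 = if odd n then 3 * n + 3 ^ k else n.
Proof.
rewrite /T; case: ifP => odd_n; apply: even_halfK; last by rewrite odd_n.
by rewrite oddD oddM oddX /= odd_n orbT.
Qed.

Lemma T_gt0 k n : 0 < n -> 0 < T k n.
Proof.
move=> n_gt0; rewrite -double_gt0 double_T.
by case: ifP => // _; rewrite addn_gt0 expn_gt0 orbT.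
Qed.

Lemma iter_T_gt0 k j n : 0 < n -> 0 < iter j (T k) n.
Proof. by move=> n_gt0; elim: j => //= j; apply: T_gt0. Qed.

Lemma dvdn_T_odd k i n : i < k -> odd n -> 3 ^ i %| n -> 3 ^ i.+1 %| T k n.
Proof.
move=> lt_ik odd_n dvd_n.
rewrite -(@Gauss_dvdr _ 2) ?coprimeXl // mul2n double_T odd_n.
by rewrite dvdn_add ?dvdn_exp2l // expnS dvdn_mul.
Qed.

Lemma dvdn_T_even k d n : ~~ odd n -> d %| n -> coprime d 2 -> d %| T k n.
Proof.
move=> even_n dvd_n cop.
by rewrite -(Gauss_dvdr _ cop) mul2n double_T (negbTE even_n).
Qed.

Lemma iter_T_dvd_expS k i n : i < k -> 0 < n -> 3 ^ i %| n ->
  exists j, 3 ^ i.+1 %| iter j (T k) n.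
Proof.
move=> lt_ik; elim/ltn_ind: n => n IH n_gt0 dvd_n.
case odd_n: (odd n); first by exists 1; apply: dvdn_T_odd.
have halve : (T k n).*2 = n by rewrite double_T odd_n.
have lt_Tn : T k n < n by lia.
have cop : coprime (3 ^ i) 2 by rewrite coprimeXl.
have [j dvd_j] :=
  IH _ lt_Tn (T_gt0 k n_gt0) (dvdn_T_even k (negbT odd_n) dvd_n cop).
by exists j.+1; rewrite iterSr.
Qed.

Lemma iter_T_dvd_exp k i n : i <= k -> 0 < n ->
  exists j, 3 ^ i %| iter j (T k) n.
Proof.
move=> + n_gt0; elim: i => [|i IH] lt_ik; first by exists 0; rewrite dvd1n.
have [j dvd_j] := IH (ltnW lt_ik).
have [j' dvd_j'] := iter_T_dvd_expS lt_ik (iter_T_gt0 k j n_gt0) dvd_j.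
by exists (j' + j); rewrite iterD.
Qed.

Lemma T_scale k m : T k (3 ^ k * m) = 3 ^ k * T 0 m.
Proof.
apply: double_inj; rewrite doubleMr !double_T oddM oddX orbT /= expn0.
by case: (odd m); rewrite // mulnDr muln1 mulnCA.
Qed.

Lemma iter_T_scale k j m : iter j (T k) (3 ^ k * m) = 3 ^ k * iter j (T 0) m.
Proof. by elim: j => //= j ->; rewrite T_scale. Qed.

Lemma iter_T0_from1 j : iter j (T 0) 1 = 1 \/ iter j (T 0) 1 = 2.
Proof. by elim: j => [|j IH] /=; [left | case: IH => ->; [right | left]]. Qed.

Theorem corollary1 :
  (forall n : nat, 0 < n -> exists j : nat, iter j (T 0) n = 1) ->
  forall k n : nat, 0 < n ->
    exists J : nat, forall j : nat, J <= j ->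
      iter j (T k) n = 3 ^ k \/ iter j (T k) n = 2 * 3 ^ k.
Proof.
move=> collatz k n n_gt0.
have [j0 /dvdnP[m def_m]] := iter_T_dvd_exp (leqnn k) n_gt0.
have m_gt0 : 0 < m.
  by have := iter_T_gt0 k j0 n_gt0; rewrite def_m muln_gt0 => /andP[].
have [j1 m_to_1] := collatz m m_gt0.
exists (j1 + j0) => j le_j.
rewrite -(subnK le_j) !iterD def_m (mulnC m) !iter_T_scale m_to_1.
case: (iter_T0_from1 (j - (j1 + j0))) => ->; first by left; rewrite muln1.
by right; rewrite mulnC.
Qed.
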